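(* Let $f(x)=\sum_{n\ge1}q_n x^n$ be a formal power series with complex coefficients and $q:=q_1\ne0$. For all integers $s\ge 0$ and $n\ge k\ge 0$, \[ \begin{bmatrix} n\\ k\end{bmatrix}_{\phi^s}=\frac{n!}{k!}\sum_{\vec L\in\mathcal P_{n-k}} C(\vec L)\prod_{p=1}^{n-k} q_{p+1}^{L_p}, \] where \[ C(\vec L):=\sum_{\vec\ell_1+\cdots+\vec\ell_s=\vec L} q^{\sum_{t=1}^s (s-t)\langle\vec\ell_t\rangle+sk-|\vec L|}\prod_{i=1}^s\binom{\sum_{t=1}^{i-1}\langle\vec\ell_t\rangle+k}{\vec\ell_i,\ \sum_{t=1}^{i-1}\langle\vec\ell_t\rangle+k-|\vec\ell_i|}, \] the sum being over all $s$-tuples $(\vec\ell_1,\dots,\vec\ell_s)$ of finitely supported sequences $\vec\ell_t\in\mathbb{N}^{\mathbb{N}^*}$ with $\vec\ell_1+\cdots+\vec\ell_s=\vec L$ (componentwise).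
   Context: For an integer $s\ge0$, $f^s$ is the $s$-fold compositional iterate of $f$ ($f^0(x)=x$), and $\begin{bmatrix} n\\ k\end{bmatrix}_{\phi^s}$ is defined by $\frac{f^s(x)^k}{k!}=\sum_{n\ge k}\begin{bmatrix} n\\ k\end{bmatrix}_{\phi^s}\frac{x^n}{n!}$. Multi-indices: $\vec\ell=(\ell_1,\ell_2,\dots)$ with $\ell_p\in\mathbb{N}$ and finitely many nonzero; $|\vec\ell|:=\sum_p\ell_p$ and $\langle\vec\ell\rangle:=\sum_p p\,\ell_p$. $\mathcal P_m$ is the set of such $\vec\ell$ with $\ell_p=0$ for $p>m$ and $\langle\vec\ell\rangle=m$. For an integer $N$ and multi-index $\vec\ell$, $\binom{N}{\vec\ell,\,r}:=\frac{N!}{\ell_1!\ell_2!\cdots\, r!}$ with $r=N-|\vec\ell|$, understood to be $0$ when $r<0$. *)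

From HB Require Import structures.
From mathcomp Require Import all_boot all_order all_algebra.
From mathcomp Require Import reals complex.
Set Implicit Arguments. Unset Strict Implicit. Unset Printing Implicit Defensive.
Import Order.TTheory GRing.Theory Num.Theory.
Local Open Scope ring_scope.

Section FPS.
Variable C : fieldType.

Definition fps := nat -> C.

Definition fps_mul (a b : fps) : fps :=
  fun n => \sum_(i < n.+1) a i * b (n - i)%N.

Fixpoint fps_exp (a : fps) (k : nat) : fps :=
  match k with
  | 0 => fun n => (n == 0%N)%:R
  | k'.+1 => fps_mul a (fps_exp a k')
  end.

(* Composition g(h(x)), meaningful when h has zero constant term. *)
Definition fps_comp (g h : fps) : fps :=
  fun n => \sum_(j < n.+1) g j * fps_exp h j n.

Fixpoint fps_iter (f : fps) (s : nat) : fps :=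
  match s with
  | 0 => fun n => (n == 1%N)%:R
  | s'.+1 => fps_comp f (fps_iter f s')
  end.

(* [n, k]_{phi^s} defined by f^s(x)^k / k! = sum_n [n,k]_{phi^s} x^n / n!. *)
Definition bracket_phi (f : fps) (s n k : nat) : C :=
  n`!%:R * fps_exp (fps_iter f s) k n / k`!%:R.

Definition series_of (q : nat -> C) : fps :=
  fun n => if n is 0 then 0 else q n.

(* Multi-indices with support in {1..m}: l : 'I_m -> nat, l j = l_{j+1}.
   Entries are bounded by m (enough for all indices occurring below). *)
Definition mindex (m : nat) := {ffun 'I_m -> 'I_m.+1}.

Definition mabs m (l : mindex m) : nat := (\sum_(j < m) l j)%N.
Definition mwt m (l : mindex m) : nat := (\sum_(j < m) j.+1 * l j)%N.

Definition multinom m (N : nat) (l : mindex m) : C :=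
  if (mabs l <= N)%N then
    N`!%:R / ((\prod_(j < m) (l j)`!)%N * (N - mabs l)`!)%:R
  else 0.

Definition coefC (q1 : C) (s k m : nat) (L : mindex m) : C :=
  \sum_(ls : {ffun 'I_s -> mindex m} |
          [forall j : 'I_m, (\sum_(t < s) ls t j)%N == L j])
    (q1 ^ ((\sum_(t < s) (s - t.+1) * mwt (ls t) + s * k)%N%:Z - (mabs L)%:Z)
     * \prod_(i < s)
         multinom ((\sum_(t < s | (t < i)%N) mwt (ls t))%N + k) (ls i)).

Definition rhs_phi (q : nat -> C) (s n k : nat) : C :=
  n`!%:R / k`!%:R *
  \sum_(L : mindex (n - k) | mwt L == (n - k)%N)
    (coefC (q 1%N) s k L * \prod_(j < n - k) q j.+2 ^+ L j).

End FPS.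

From Pilot Require Import Defs.
From HB Require Import structures.
From mathcomp Require Import all_boot all_order all_algebra.
From mathcomp Require Import reals complex.
From mathcomp Require Import zify ring.
Import Order.TTheory GRing.Theory Num.Theory.
Local Open Scope ring_scope.
Set Implicit Arguments. Unset Strict Implicit.

(* Truncating f after degree n + 1 changes no coefficient of degree at most n
   of (f^s)^k, so it suffices to work with the polynomial F and its s-fold
   composite F^[s].  The multinomial theorem, proved by induction on N from the
   Pascal rule for multinomial coefficients, gives
     [x^(N+e)] F^N = sum_(<l> = e) (N; l, N - |l|) q^(N - |l|) prod_p q_(p+1)^(l_p).
   Since (F^[s+1])^N = F^N o F^[s], expanding the outermost composition first
   writes [x^(N+d)] (F^[s])^N as a sum, over s-tuples (l_1, ..., l_s) of total
   weight d, of products of such terms, the i-th one with N replaced by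
   N + <l_1> + ... + <l_(i-1)>.  Grouping the tuples by their sum L and
   collecting the powers of q yields C(L). *)

Section LowOrderCoefficients.
Variable R : comNzRingType.
Implicit Types F G H : {poly R}.

Lemma coef_exp_lt H i n : H`_0 = 0 -> (n < i)%N -> (H ^+ i)`_n = 0.
Proof.
move=> H0; elim: i n => [|i IH] n //= lt_ni.
rewrite exprS coefM big1 // => -[[|j] /= lt_jn] _; first by rewrite H0 mul0r.
by rewrite IH ?mulr0 //; lia.
Qed.

Lemma coef_comp_poly_low G H n : H`_0 = 0 ->
  (G \Po H)`_n = \sum_(j < n.+1) G`_j * (H ^+ j)`_n.
Proof.
move=> H0; have widen := big_ord_widen (n.+1 + size G) (fun j => G`_j * (H ^+ j)`_n).
rewrite coef_comp_poly widen ?leq_addl // [RHS]widen ?leq_addr //.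
rewrite big_mkcond [RHS]big_mkcond; apply: eq_bigr => -[j _] _ /=.
case: ltnP => j_size; case: ltnP => j_n //; first by rewrite coef_exp_lt ?mulr0.
by rewrite nth_default ?mul0r.
Qed.

Lemma coef_exprS_low F N e : F`_0 = 0 ->
  (F ^+ N.+1)`_(N.+1 + e) = \sum_(p < e.+1) F`_p.+1 * (F ^+ N)`_(N + (e - p)).
Proof.
move=> F0; rewrite exprS coefM big_ord_recl F0 mul0r add0r.
rewrite [RHS](big_ord_widen (N.+1 + e) (fun p => F`_p.+1 * (F ^+ N)`_(N + (e - p)))); last by lia.
rewrite [RHS]big_mkcond; apply: eq_bigr => -[p lt_p] _; rewrite lift0 /=; case: ltnP => p_e.
  by congr (_ * _`__); lia.
by rewrite coef_exp_lt ?mulr0 //; lia.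
Qed.

Definition comp_iter F s := iter s (fun T => F \Po T) 'X.

Lemma comp_iter_coef0 F s : F`_0 = 0 -> (comp_iter F s)`_0 = 0.
Proof.
move=> F0; elim: s => [|s IH] /=; first by rewrite coefX.
by rewrite coef_comp_poly_low // big_ord1 F0 mul0r.
Qed.

End LowOrderCoefficients.

Section Truncation.
Variable K : fieldType.
Implicit Types (a b f : fps K) (A B : {poly K}).

Definition agree_upto N a A := forall i, (i <= N)%N -> a i = A`_i.

Lemma fps_exp_agree N a A k : agree_upto N a A -> agree_upto N (fps_exp a k) (A ^+ k).
Proof.
move=> aA; elim: k => [|k IH] n le_nN /=; first by rewrite expr0 coef1.
rewrite exprS coefM; apply: eq_bigr => -[j lt_jn] _ /=.
by rewrite aA ?IH //; lia.
Qed.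

Lemma fps_comp_agree N a b A B : B`_0 = 0 ->
  agree_upto N a A -> agree_upto N b B -> agree_upto N (fps_comp a b) (A \Po B).
Proof.
move=> B0 aA bB n le_nN; rewrite coef_comp_poly_low //.
apply: eq_bigr => -[j lt_jn] _ /=; rewrite aA; last by lia.
by rewrite (fps_exp_agree _ bB).
Qed.

Lemma fps_iter_agree N f s : f 0%N = 0 ->
  agree_upto N (fps_iter f s) (comp_iter (\poly_(i < N.+1) f i) s).
Proof.
set F := \poly_(i < N.+1) f i => f0.
have fF : agree_upto N f F by move=> i le_iN; rewrite coef_poly ltnS le_iN.
have F0 : F`_0 = 0 by rewrite -fF.
elim: s => [|s IH] i le_iN /=; first by rewrite coefX.
by rewrite (fps_comp_agree (comp_iter_coef0 s F0) fF IH).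
Qed.

End Truncation.

Section MultiIndex.
Variable m : nat.
Implicit Types (l : mindex m) (i j : 'I_m).

Definition mdec j l : mindex m := [ffun i => inord (l i - (i == j))].
Definition minc j l : mindex m := [ffun i => inord (l i + (i == j))].
Definition mzero : mindex m := [ffun => ord0].

Lemma mdecE j l i : mdec j l i = (l i - (i == j))%N :> nat.
Proof. by rewrite ffunE inordK //; have := ltn_ord (l i); lia. Qed.

Lemma mincE j l i : (l j < m)%N -> minc j l i = (l i + (i == j))%N :> nat.
Proof.
by move=> lt_lj; rewrite ffunE inordK //; case: eqP => [->|_]; have := ltn_ord (l i); lia.
Qed.

Lemma mincK j l : (l j < m)%N -> mdec j (minc j l) = l.
Proof. by move=> lt_lj; apply/ffunP => i; apply/val_inj; rewrite /= mdecE mincE ?addnK. Qed.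

Lemma mdecK j l : (0 < l j)%N -> minc j (mdec j l) = l.
Proof.
move=> lj_gt0; have : (mdec j l j < m)%N by rewrite mdecE eqxx; have := ltn_ord (l j); lia.
move=> /mincE mincE'; apply/ffunP => i; apply/val_inj.
by rewrite /= mincE' mdecE; case: eqP => [->|_]; lia.
Qed.

Lemma big_mdec (R : Type) (idx : R) (op : Monoid.com_law idx) (F : nat -> 'I_m -> R) j l :
  \big[op/idx]_i F (mdec j l i) i = op (F (l j).-1 j) (\big[op/idx]_(i | i != j) F (l i) i).
Proof.
rewrite (bigD1 j) //= mdecE eqxx subn1; congr (op _ _).
by apply: eq_bigr => i /negbTE i_j; rewrite mdecE i_j subn0.
Qed.

Lemma mabs_mdec j l : (0 < l j)%N -> mabs l = (mabs (mdec j l)).+1.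
Proof. by rewrite /mabs (bigD1 j) //= (big_mdec _ (fun x _ => x)) /=; lia. Qed.

Lemma mwt_mdec j l : (0 < l j)%N -> mwt l = (mwt (mdec j l) + j.+1)%N.
Proof.
rewrite /mwt (bigD1 j) //= (big_mdec _ (fun x (i : 'I_m) => i.+1 * x)%N) /=.
by case: (l j : nat) => // x _; rewrite mulnS /=; lia.
Qed.

Lemma prod_fact_mdec j l : (0 < l j)%N ->
  (\prod_i (l i)`! = l j * \prod_i (mdec j l i)`!)%N.
Proof.
rewrite (bigD1 j) //= (big_mdec _ (fun x _ => x`!)) /=.
by case: (l j : nat) => // x _; rewrite factS mulnA.
Qed.

Lemma leq_entry_mabs j l : (l j <= mabs l)%N.
Proof. by rewrite /mabs (bigD1 j) //= leq_addr. Qed.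

Lemma leq_entry_mwt j l : (j.+1 * l j <= mwt l)%N.
Proof. by rewrite /mwt (bigD1 j) //= leq_addr. Qed.

Lemma mabs_eq0 l : (mabs l == 0%N) = (l == mzero).
Proof.
apply/eqP/eqP => [l0|->]; last by rewrite /mabs big1 // => i _; rewrite ffunE.
apply/ffunP => i; apply/val_inj; rewrite ffunE /=.
by have := leq_entry_mabs i l; rewrite l0; lia.
Qed.

Lemma mwt_mzero : mwt mzero = 0%N.
Proof. by rewrite /mwt big1 // => i _; rewrite ffunE muln0. Qed.

End MultiIndex.

Arguments mzero {m}.

Section MultinomialPascal.
Variables (C : numFieldType) (m : nat).
Implicit Types (l : mindex m) (j : 'I_m).

Let mfact l := (\prod_(j < m) (l j)`!)%N.

Let mfact_neq0 l : (mfact l)%:R != 0 :> C.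
Proof. by rewrite pnatr_eq0 -lt0n prodn_gt0 // => j; rewrite fact_gt0. Qed.

Let fact_neq0 N : N`!%:R != 0 :> C.
Proof. by rewrite pnatr_eq0 -lt0n fact_gt0. Qed.

Lemma multinom_subS N l : (mabs l <= N.+1)%N ->
  multinom C N l = N`!%:R * (N.+1 - mabs l)%:R / (mfact l * (N.+1 - mabs l)`!)%:R.
Proof.
move=> le_lN; rewrite /multinom -/(mfact l); case: leqP => [le_lN'|lt_Nl].
  rewrite subSn // factS !natrM.
  by field; rewrite mfact_neq0 fact_neq0 nat1r pnatr_eq0.
have -> : (N.+1 - mabs l = 0)%N by lia.
by rewrite mulr0 mul0r.
Qed.

Lemma multinom_mdec N j l : (0 < l j)%N -> (mabs l <= N.+1)%N ->
  multinom C N (mdec j l) = N`!%:R * (l j)%:R / (mfact l * (N.+1 - mabs l)`!)%:R.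
Proof.
move=> lj_gt0; rewrite /multinom (mabs_mdec lj_gt0) ltnS => ->.
rewrite /mfact (prod_fact_mdec lj_gt0) !natrM.
have lj_neq0 : (l j)%:R != 0 :> C by rewrite pnatr_eq0 -lt0n.
by field; rewrite lj_neq0 mfact_neq0 fact_neq0.
Qed.

Lemma multinomS N l :
  multinom C N.+1 l = multinom C N l + \sum_(j | (0 < l j)%N) multinom C N (mdec j l).
Proof.
case: (leqP (mabs l) N.+1) => [le_lN|lt_Nl]; last first.
  rewrite /multinom ifN -?ltnNge // ifN -?ltnNge ?(ltnW lt_Nl) // add0r.
  rewrite big1 // => j lj_gt0; rewrite ifN // -ltnNge.
  by move: lt_Nl; rewrite (mabs_mdec lj_gt0).
rewrite [multinom C N l]multinom_subS //; under eq_bigr => j lj_gt0 do rewrite multinom_mdec //.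
rewrite -mulr_suml -mulr_sumr.
have -> : \sum_(j | (0 < l j)%N) (l j)%:R = (mabs l)%:R :> C.
  rewrite /mabs natr_sum big_mkcond /=; apply: eq_bigr => j _.
  by case: ifP => //; rewrite lt0n => /negbFE /eqP ->.
rewrite /multinom le_lN -/(mfact l) factS !natrM natrB //.
by field; rewrite mfact_neq0 fact_neq0.
Qed.

End MultinomialPascal.

Section MultinomialTheorem.
Variables (C : numFieldType) (m : nat) (q : nat -> C).
Hypothesis hq : q 1%N != 0.
Implicit Types (l : mindex m) (j : 'I_m).

Definition qmono l := \prod_(j < m) q j.+2 ^+ l j.
Definition mterm N l := multinom C N l * q 1%N ^ (N%:Z - (mabs l)%:Z) * qmono l.

Lemma qmono_mdec j l : (0 < l j)%N -> qmono l = q j.+2 * qmono (mdec j l).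
Proof.
rewrite /qmono (bigD1 j) //= (big_mdec _ (fun x (i : 'I_m) => q i.+2 ^+ x)) /=.
by case: (l j : nat) => // x _; rewrite exprS mulrA.
Qed.

Lemma mtermS N l :
  mterm N.+1 l = q 1%N * mterm N l + \sum_(j | (0 < l j)%N) q j.+2 * mterm N (mdec j l).
Proof.
have q1_unit : q 1%N \is a GRing.unit by rewrite unitfE.
rewrite /mterm multinomS !mulrDl big_distrl big_distrl /=; congr (_ + _).
  have -> : N.+1%:Z - (mabs l)%:Z = 1 + (N%:Z - (mabs l)%:Z) by lia.
  by rewrite [q 1%N ^ (1 + _)]exprzDr // expr1z; ring.
apply: eq_bigr => j lj_gt0; rewrite (qmono_mdec lj_gt0).
have -> : N.+1%:Z - (mabs l)%:Z = N%:Z - (mabs (mdec j l))%:Z.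
  by rewrite (mabs_mdec lj_gt0); lia.
ring.
Qed.

Lemma mterm0 l : mterm 0 l = (l == mzero)%:R.
Proof.
rewrite /mterm /multinom -mabs_eq0; case: eqP => [l0|/eqP l_neq0].
  rewrite l0 /= subn0 /qmono !big1 ?mul1n ?mulr1 ?expr0z ?divr1 // => i _;
    by have := leq_entry_mabs i l; rewrite l0 leqn0 => /eqP ->.
by rewrite ifN ?mul0r // -ltnNge lt0n.
Qed.

Lemma sum_mterm_mdec N j e : (e <= m)%N ->
  \sum_(l | (mwt l == e) && (0 < l j)%N) mterm N (mdec j l) =
  if (j < e)%N then \sum_(l | mwt l == (e - j.+1)%N) mterm N l else 0.
Proof.
move=> le_em; case: ltnP => [lt_je|le_ej]; last first.
  rewrite big1 // => l /andP [/eqP wt_l lj_gt0]; exfalso.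
  have := leq_trans (leq_pmulr j.+1 lj_gt0) (leq_entry_mwt j l).
  by rewrite wt_l; lia.
rewrite (reindex_onto (minc j) (mdec j)); last by move=> l /andP [_ /mdecK].
apply: eq_big => [l|l /andP [_ /eqP ->] //].
apply/idP/idP.
  move=> /andP [/andP [/eqP wt_l lj_gt0] /eqP dec_l].
  by move: wt_l; rewrite (mwt_mdec lj_gt0) dec_l => <-; rewrite addnK.
move=> /eqP wt_l.
have lt_ljm : (l j < m)%N.
  have := leq_trans (leq_pmull (l j) (ltn0Sn j)) (leq_entry_mwt j l).
  by rewrite wt_l; lia.
have inc_gt0 : (0 < minc j l j)%N by rewrite mincE // eqxx addn1.
rewrite mincK // eqxx inc_gt0 (mwt_mdec inc_gt0) mincK // wt_l !andbT.
apply/eqP; lia.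
Qed.

Variable F : {poly C}.
Hypothesis F_series : forall i, (i <= m.+1)%N -> F`_i = series_of q i.

Lemma coef_exp_series N e : (e <= m)%N ->
  (F ^+ N)`_(N + e) = \sum_(l | mwt l == e) mterm N l.
Proof.
have F0 : F`_0 = 0 by rewrite F_series.
elim: N e => [|N IH] e le_em.
  rewrite expr0 coef1 add0n (eq_bigr _ (fun l _ => mterm0 l)).
  case: e le_em => [|e] _.
    by rewrite (bigD1 mzero) ?mwt_mzero //= eqxx big1 ?addr0 // => l /andP [_ /negbTE ->].
  by rewrite big1 // => l /eqP wt_l; case: eqP => // l0; move: wt_l; rewrite l0 mwt_mzero.
rewrite coef_exprS_low //.
under eq_bigr => p _ do rewrite (IH _ (leq_trans (leq_subr _ _) le_em)).
rewrite big_ord_recl subn0 F_series //.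
under [RHS]eq_bigr => l _ do rewrite mtermS.
rewrite big_split /= -mulr_sumr; congr (_ + _).
rewrite (exchange_big_dep predT) //=.
under [RHS]eq_bigr => j _ do rewrite -mulr_sumr sum_mterm_mdec // (fun_if (GRing.mul _)) mulr0.
rewrite -big_mkcond /=.
pose G (j : nat) := q j.+2 * \sum_(l | mwt l == (e - j.+1)%N) mterm N l.
rewrite -(big_ord_widen_cond _ predT G le_em).
by apply: eq_bigr => i _; rewrite /bump add1n F_series //; have := ltn_ord i; lia.
Qed.

End MultinomialTheorem.

Section FfunCons.
Variables (A : finType) (s : nat).

Definition ffun_cons (a : A) (g : {ffun 'I_s -> A}) : {ffun 'I_s.+1 -> A} :=
  [ffun i => if unlift ord0 i is Some j then g j else a].

Lemma ffun_cons0 a g : ffun_cons a g ord0 = a.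
Proof. by rewrite ffunE unlift_none. Qed.

Lemma ffun_consS a g j : ffun_cons a g (lift ord0 j) = g j.
Proof. by rewrite ffunE liftK. Qed.

Lemma big_ffun_cons (R : Type) (idx : R) (op : Monoid.com_law idx)
    (F : {ffun 'I_s.+1 -> A} -> R) :
  \big[op/idx]_f F f = \big[op/idx]_a \big[op/idx]_(g : {ffun 'I_s -> A}) F (ffun_cons a g).
Proof.
rewrite pair_big (reindex (fun p : A * {ffun 'I_s -> A} => ffun_cons p.1 p.2)) //.
apply: onW_bij; exists (fun f : {ffun 'I_s.+1 -> A} => (f ord0, [ffun j => f (lift ord0 j)])).
  move=> [a g] /=; rewrite ffun_cons0; congr pair.
  by apply/ffunP => j; rewrite ffunE ffun_consS.
move=> f; apply/ffunP => i; rewrite ffunE /=.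
by case: unliftP => [j ->|->]; rewrite ?ffunE.
Qed.

End FfunCons.

Section IteratedComposition.
Variables (C : numFieldType) (m : nat) (q : nat -> C).
Hypothesis hq : q 1%N != 0.
Implicit Types (l : mindex m).

Definition mchain s N d :=
  \sum_(ls : {ffun 'I_s -> mindex m} | (\sum_(t < s) mwt (ls t))%N == d)
    \prod_(i < s) mterm q (N + \sum_(t < s | (t < i)%N) mwt (ls t))%N (ls i).

Lemma mchain0 N d : mchain 0 N d = (d == 0%N)%:R.
Proof.
rewrite /mchain; under eq_bigl => ls do rewrite big_ord0.
under eq_bigr => ls _ do rewrite big_ord0.
case: d => [|d]; last by rewrite big_pred0.
by rewrite sumr_const card_ffun card_ord expn0.
Qed.

Lemma mchainS s N d : mchain s.+1 N d =
  \sum_(l : mindex m | (mwt l <= d)%N) mterm q N l * mchain s (N + mwt l)%N (d - mwt l)%N.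
Proof.
rewrite /mchain big_mkcond big_ffun_cons [RHS]big_mkcond; apply: eq_bigr => a _ /=.
have cons_sum g : (\sum_(t < s.+1) mwt (ffun_cons a g t) = mwt a + \sum_(t < s) mwt (g t))%N.
  by rewrite big_ord_recl ffun_cons0; under eq_bigr => t _ do rewrite ffun_consS.
have cons_prefix g (i : 'I_s) : (\sum_(t < s.+1 | (t < lift ord0 i)%N) mwt (ffun_cons a g t)
    = mwt a + \sum_(t < s | (t < i)%N) mwt (g t))%N.
  rewrite big_mkcond big_ord_recl ffun_cons0 [in RHS]big_mkcond /=.
  by under eq_bigr => t _ do rewrite /bump !add1n ltnS ffun_consS.
have cons_prod g :
    \prod_(i < s.+1)
      mterm q (N + \sum_(t < s.+1 | (t < i)%N) mwt (ffun_cons a g t))%N (ffun_cons a g i)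
    = mterm q N a * \prod_(i < s) mterm q (N + mwt a + \sum_(t < s | (t < i)%N) mwt (g t))%N (g i).
  rewrite big_ord_recl ffun_cons0 big_pred0 ?addn0 //.
  by under eq_bigr => i _ do rewrite cons_prefix ffun_consS addnA.
under eq_bigr => g _ do rewrite cons_sum cons_prod.
case: leqP => [le_ad|lt_da]; last first.
  by rewrite big1 // => g _; rewrite ifN //; apply/eqP; lia.
rewrite big_distrr [RHS]big_mkcond; apply: eq_bigr => g _ /=.
have -> : (mwt a + \sum_(t < s) mwt (g t) == d)%N = (\sum_(t < s) mwt (g t) == d - mwt a)%N.
  by apply/eqP/eqP; lia.
by case: ifP; rewrite ?mulr0.
Qed.

Lemma sum_mwt_leq d (h : mindex m -> C) :
  \sum_(l : mindex m | (mwt l <= d)%N) h l = \sum_(e < d.+1) \sum_(l : mindex m | mwt l == e) h l.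
Proof.
rewrite (exchange_big_dep predT) //= big_mkcond; apply: eq_bigr => l _.
rewrite (eq_bigl (fun e : 'I_d.+1 => nat_of_ord e == mwt l)) => [|e]; last by rewrite eq_sym.
by rewrite (big_ord1_eq _ (fun=> h l)).
Qed.

Variable F : {poly C}.
Hypothesis F_series : forall i, (i <= m.+1)%N -> F`_i = series_of q i.

Lemma coef_comp_iter_exp s N d : (d <= m)%N ->
  ((comp_iter F s) ^+ N)`_(N + d) = mchain s N d.
Proof.
have F0 : F`_0 = 0 by rewrite F_series.
elim: s N d => [|s IH] N d le_dm.
  by rewrite /= coefXn mchain0 -{2}[N]addn0 eqn_add2l.
rewrite /= -[_ ^+ N](rmorphXn (comp_poly (comp_iter F s))) /=.
rewrite coef_comp_poly_low ?comp_iter_coef0 // -addnS big_split_ord /=.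
rewrite big1 ?add0r => [|j _]; last by rewrite coef_exp_lt ?mul0r.
rewrite mchainS sum_mwt_leq; apply: eq_bigr => e _.
have le_ed : (e <= d)%N by rewrite -ltnS.
rewrite (coef_exp_series hq F_series) ?(leq_trans le_ed) // mulr_suml.
apply: eq_bigr => l /eqP wt_l; rewrite wt_l -IH ?(leq_trans (leq_subr _ _) le_dm) //.
by rewrite -addnA subnKC.
Qed.

End IteratedComposition.

Lemma prod_exprz (R : unitRingType) (x : R) (I : Type) (r : seq I) (P : pred I)
    (z : I -> int) :
  x \is a GRing.unit -> \prod_(i <- r | P i) x ^ z i = x ^ (\sum_(i <- r | P i) z i).
Proof. by move=> x_unit; rewrite (big_morph _ (exprzDr x_unit) (expr0z x)). Qed.

Lemma sum_ord_gt s t M : (\sum_(i < s | (t < i)%N) M = (s - t.+1) * M)%N.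
Proof. by rewrite -[RHS]sum_nat_const_nat big_geq_mkord. Qed.

Lemma sum_prefix_sums s (a : 'I_s -> nat) :
  (\sum_(i < s) \sum_(t < s | (t < i)%N) a t = \sum_(t < s) (s - t.+1) * a t)%N.
Proof.
rewrite (exchange_big_dep predT) //=; apply: eq_bigr => t _.
by rewrite sum_ord_gt.
Qed.

Section Regrouping.
Variable m : nat.
Implicit Types (L : mindex m).

Definition msum s (ls : {ffun 'I_s -> mindex m}) : mindex m :=
  [ffun j => inord (\sum_(t < s) ls t j)].

Lemma sum_mwt s (ls : {ffun 'I_s -> mindex m}) :
  (\sum_(t < s) mwt (ls t) = \sum_(j < m) j.+1 * \sum_(t < s) ls t j)%N.
Proof. by rewrite exchange_big /=; apply: eq_bigr => j _; rewrite big_distrr. Qed.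

Lemma leq_sum_entry_mwt s (ls : {ffun 'I_s -> mindex m}) j :
  (\sum_(t < s) ls t j <= \sum_(t < s) mwt (ls t))%N.
Proof. by apply: leq_sum => t _; exact: leq_trans (leq_pmull _ _) (leq_entry_mwt j _). Qed.

Lemma msumE s (ls : {ffun 'I_s -> mindex m}) j : (\sum_(t < s) mwt (ls t) <= m)%N ->
  msum ls j = (\sum_(t < s) ls t j)%N :> nat.
Proof.
move=> le_wt_m; have lt_sum_m : (\sum_(t < s) ls t j < m.+1)%N.
  by rewrite ltnS (leq_trans (leq_sum_entry_mwt ls j)).
by rewrite ffunE inordK.
Qed.

Lemma msum_eqE s (ls : {ffun 'I_s -> mindex m}) L : mwt L = m ->
  ((\sum_(t < s) mwt (ls t) == m) && (msum ls == L)) =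
  [forall j, (\sum_(t < s) ls t j)%N == L j].
Proof.
move=> wt_L; apply/idP/forallP => [/andP [/eqP wt_ls /eqP <-] j|sum_L].
  by rewrite msumE ?wt_ls.
have wt_ls : (\sum_(t < s) mwt (ls t) = m)%N.
  by rewrite sum_mwt -[in RHS]wt_L /mwt; apply: eq_bigr => j _; rewrite (eqP (sum_L j)).
rewrite wt_ls eqxx; apply/eqP/ffunP => j; apply/val_inj.
by rewrite /= msumE ?wt_ls // (eqP (sum_L j)).
Qed.

End Regrouping.

Section ChainCoefficient.
Variables (C : numFieldType) (m : nat) (q : nat -> C).
Hypothesis hq : q 1%N != 0.

Lemma prod_mterm_chain s k (ls : {ffun 'I_s -> mindex m}) (L : mindex m) :
    (forall j, (\sum_(t < s) ls t j)%N = L j) ->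
  \prod_(i < s) mterm q (k + \sum_(t < s | (t < i)%N) mwt (ls t))%N (ls i) =
  q 1%N ^ ((\sum_(t < s) (s - t.+1) * mwt (ls t) + s * k)%N%:Z - (mabs L)%:Z)
  * \prod_(i < s) multinom C (\sum_(t < s | (t < i)%N) mwt (ls t) + k)%N (ls i)
  * qmono q L.
Proof.
move=> sum_L; rewrite /mterm !big_split /= [q 1%N ^ _ * _]mulrC; congr (_ * _ * _).
- by apply: eq_bigr => i _; rewrite addnC.
- rewrite prod_exprz ?unitfE // sumrB -!(big_morph Posz PoszD (erefl 0%:Z)).
  rewrite big_split /= sum_prefix_sums sum_nat_const card_ord addnC.
  by congr (_ ^ (_ - Posz _)); rewrite /mabs exchange_big /=; apply: eq_bigr => j _.
- by rewrite /qmono exchange_big /=; apply: eq_bigr => j _; rewrite prodrXr sum_L.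
Qed.

(* [coefC] alone would denote the poly.v lemma. *)
Lemma mchain_coefC s k :
  mchain m q s k m = \sum_(L : mindex m | mwt L == m) Defs.coefC (q 1%N) s k L * qmono q L.
Proof.
rewrite /mchain (partition_big (@msum m s) (fun L : mindex m => mwt L == m)); last first.
  move=> ls /eqP wt_ls; apply/eqP; rewrite /mwt -[RHS]wt_ls sum_mwt.
  by apply: eq_bigr => j _; rewrite msumE ?wt_ls.
apply: eq_bigr => L /eqP wt_L; rewrite /Defs.coefC mulr_suml.
apply: eq_big => [ls|ls]; first exact: msum_eqE.
rewrite msum_eqE // => /forallP sum_L.
by rewrite (prod_mterm_chain _ (fun j => eqP (sum_L j))).
Qed.

End ChainCoefficient.

Unset Implicit Arguments.

Theorem mainTheorem4 (R : realType) (q : nat -> R[i]) (hq : q 1%N != 0)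
    (s n k : nat) (hkn : (k <= n)%N) :
  bracket_phi (series_of q) s n k = rhs_phi q s n k.
Proof.
pose F := \poly_(i < n.+2) series_of q i.
have F_series i : (i <= (n - k).+1)%N -> F`_i = series_of q i.
  by move=> le_i; rewrite coef_poly ltnS (leq_trans le_i) // ltnS leq_subr.
have iter_agree := fps_exp_agree k (fps_iter_agree (N := n.+1) s (erefl : series_of q 0 = 0)).
rewrite /bracket_phi /rhs_phi iter_agree // -/F.
have := coef_comp_iter_exp hq F_series s k (leqnn (n - k)).
rewrite subnKC // => ->.
by rewrite mchain_coefC // mulrAC.
Qed.
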